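(* Fix $n\ge1$. For $\theta>0$ let $K_n(\theta)$ be a random variable with $P\{K_n(\theta)=k\}=|S_n^k|\theta^k/\theta_{(n)}$ for $k=1,\dots,n$, where $\theta_{(n)}=\theta(\theta+1)\cdots(\theta+n-1)$ and $|S_n^k|$ is the coefficient of $\theta^k$ in $\theta_{(n)}$. Then, as $\theta\to\infty$, the family of laws of $K_n(\theta)$ satisfies an LDP on $\{1,\dots,n\}$ with speed $\log\theta$ and rate function $I(k)=n-k$.
   Context: $K_n(\theta)$ is the number of distinct alleles in a sample of size $n$ from a $PD(\theta)$ population. An LDP with speed $\log\theta$ uses normalization $(\log\theta)^{-1}\log$. *)

From HB Require Import structures.
From mathcomp Require Import all_boot all_order all_algebra.
From mathcomp Require Import all_classical all_reals all_analysis.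
Set Implicit Arguments. Unset Strict Implicit. Unset Printing Implicit Defensive.
Import Order.TTheory GRing.Theory Num.Theory.
Import numFieldNormedType.Exports.
Local Open Scope classical_set_scope.
Local Open Scope ring_scope.

Section Defs.
Variable R : realType.

Definition rising_poly (n : nat) : {poly R} := \prod_(i < n) ('X + (i%:R)%:P).

Definition stirling1 (n k : nat) : R := (rising_poly n)`_k.

Definition rising (theta : R) (n : nat) : R := \prod_(i < n) (theta + i%:R).

(* Law of K_n(theta) on {1,...,n}; the ordinal i : 'I_n encodes k = i+1. *)
Definition K_law (n : nat) (theta : R) (i : 'I_n) : R :=
  stirling1 n i.+1 * theta ^+ i.+1 / rising theta n.

Definition elog_rate (a p : R) : \bar R :=
  if 0 < p then (ln p / a)%:E else -oo%E.

(* Large deviation principle, as theta -> +oo, for a family of laws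
   mu theta on a finite set T with the discrete topology (every set is open
   and closed), with speed a and rate function I. *)
Definition LDP_finite (T : finType) (mu : R -> T -> R) (a : R -> R)
    (I : T -> \bar R) : Prop :=
  (forall t, (0 <= I t)%E) /\
  forall A : {set T},
    (limf_esup (fun theta => elog_rate (a theta) (\sum_(t in A) mu theta t))
       (pinfty_nbhs R) <= - ereal_inf [set I t | t in [set t | t \in A]])%E
    /\
    (- ereal_inf [set I t | t in [set t | t \in A]] <=
       limf_einf (fun theta => elog_rate (a theta) (\sum_(t in A) mu theta t))
       (pinfty_nbhs R))%E.

End Defs.

From HB Require Import structures.
From mathcomp Require Import all_boot all_order all_algebra.
From mathcomp Require Import all_classical all_reals all_analysis.
From mathcomp Require Import lra.

Set Implicit Arguments.
Unset Strict Implicit.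
Unset Printing Implicit Defensive.
Import Order.TTheory GRing.Theory Num.Theory.
Import numFieldNormedType.Exports.
Local Open Scope classical_set_scope.
Local Open Scope ring_scope.

(* For theta >= 1 we have theta^n <= theta_(n) <= (n theta)^n, and
   |S_n^k| > 0 for 1 <= k <= n.  Hence if m is the largest element of A, the
   probability P(K_n(theta) \in A) = (sum_(k in A) |S_n^k| theta^k) / theta_(n)
   stays within constant factors of theta^(m - n), so its logarithm divided by
   log theta tends to m - n = - inf_A I.  This single limit gives both the upper
   and the lower LDP bound. *)

Section LimfBounds.
Context {T : choiceType} {X : filteredType T} {R : realType}.
Variable F : set_system X.
Implicit Type f : X -> \bar R.
Local Open Scope ereal_scope.

Lemma limf_esup_le f x :
  (forall e : R, (0 < e)%R -> F [set t | f t <= x + e%:E]) ->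
  limf_esup f F <= x.
Proof.
move=> Fx; apply/lee_addgt0Pr => e e0; apply: ge_ereal_inf.
set V := [set t | f t <= x + e%:E].
exists (ereal_sup (f @` V)); first by exists V => //; exact: Fx.
by apply: ge_ereal_sup => _ [t + <-].
Qed.

Lemma limf_einf_ge f x :
  (forall e : R, (0 < e)%R -> F [set t | x - e%:E <= f t]) ->
  x <= limf_einf f F.
Proof.
move=> Fx; apply/lee_subgt0Pr => e e0; rewrite limf_einfE.
apply: le_ereal_sup_tmp.
set V := [set t | x - e%:E <= f t].
exists (ereal_inf (f @` V)); first by exists V => //; exact: Fx.
by apply: le_ereal_inf_tmp => _ [t + <-].
Qed.
End LimfBounds.

Section LogRate.
Variable R : realType.

Lemma ln_gt_near (K : R) : \forall t \near +oo, K < ln t.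
Proof.
apply: filterS (nbhs_pinfty_gt (num_real (expR K))) => t Kt.
by rewrite -(expRK K) ltr_ln ?posrE ?expR_gt0 ?(lt_trans (expR_gt0 K) Kt).
Qed.

Lemma ln_ratio_near (g : R -> R) (L a b : R) :
  (forall t, 1 < t -> L * ln t + a <= g t <= L * ln t + b) ->
  forall e, 0 < e -> \forall t \near +oo, L - e <= g t / ln t <= L + e.
Proof.
move=> gL e e0; near=> t.
have t1 : 1 < t by near: t; apply: nbhs_pinfty_gt; exact: num_real.
have lnt : (`|a| + `|b|) / e < ln t by near: t; exact: ln_gt_near.
have lnt0 : 0 < ln t by exact: ln_gt0.
have ab : `|a| + `|b| < e * ln t by rewrite mulrC -ltr_pdivrMr.
have := ler_norm (- a); have := ler_norm b; rewrite normrN => ha hb.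
have := normr_ge0 a; have := normr_ge0 b => a0 b0.
case/andP: (gL t t1) => gl gu.
apply/andP; split.
- by rewrite ler_pdivlMr // mulrBl; lra.
- by rewrite ler_pdivrMr // mulrDl; lra.
Unshelve. all: by end_near.
Qed.

Lemma limf_elog_rate_sandwich (f : R -> R) (m n : nat) (c C : R) :
  0 < c -> (forall t, 1 <= t -> c * t ^+ m <= f t * t ^+ n <= C * t ^+ m) ->
  (limf_esup (fun t => elog_rate (ln t) (f t)) (pinfty_nbhs R)
     <= (m%:R - n%:R)%:E /\
   (m%:R - n%:R)%:E
     <= limf_einf (fun t => elog_rate (ln t) (f t)) (pinfty_nbhs R))%E.
Proof.
move=> c0 fb.
have f_gt0 t : 1 <= t -> 0 < f t.
  move=> t1; have t0 : 0 < t by exact: lt_le_trans t1.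
  case/andP: (fb t t1) => + _; rewrite -(pmulr_lgt0 _ (exprn_gt0 n t0)).
  by apply: lt_le_trans; rewrite mulr_gt0 // exprn_gt0.
have C0 : 0 < C.
  have /andP[lo hi] := fb 1 (lexx 1); rewrite !expr1n !mulr1 in lo hi.
  exact: lt_le_trans c0 (le_trans lo hi).
have ln_f t : 1 < t ->
    (m%:R - n%:R) * ln t + ln c <= ln (f t) <= (m%:R - n%:R) * ln t + ln C.
  move=> /ltW t1; have t0 : 0 < t by exact: lt_le_trans t1.
  have ft0 := f_gt0 t t1.
  have tm0 := exprn_gt0 m t0; have tn0 := exprn_gt0 n t0.
  have /andP[lo hi] := fb t t1.
  have ln_le (x y : R) : 0 < x -> 0 < y -> x <= y -> ln x <= ln y.
    by move=> x0 y0; rewrite ler_ln ?posrE.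
  move: (ln_le _ _ (mulr_gt0 c0 tm0) (mulr_gt0 ft0 tn0) lo)
        (ln_le _ _ (mulr_gt0 ft0 tn0) (mulr_gt0 C0 tm0) hi).
  rewrite !lnM ?posrE // !lnXn // => {}lo {}hi.
  by rewrite mulrBl !mulr_natl; apply/andP; split; lra.
have rate_near (e : R) : 0 < e -> \forall t \near +oo,
    (((m%:R - n%:R) - e)%:E <= elog_rate (ln t) (f t)
                            <= ((m%:R - n%:R) + e)%:E)%E.
  move=> e0; near=> t.
  have t1 : 1 < t by near: t; apply: nbhs_pinfty_gt; exact: num_real.
  rewrite /elog_rate f_gt0 ?(ltW t1) //= !lee_fin.
  by near: t; exact: ln_ratio_near ln_f e e0.
split.
- apply: limf_esup_le => e e0.
  by apply: filterS (rate_near e e0) => t /andP[_]; rewrite EFinD.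
- apply: limf_einf_ge => e e0.
  by apply: filterS (rate_near e e0) => t /andP[]; rewrite EFinB.
Unshelve. all: by end_near.
Qed.
End LogRate.

Section RisingFactorial.
Variable R : realType.

Lemma coef_rising_polyS n k :
  (rising_poly R n.+1)`_k =
    (if k is k'.+1 then (rising_poly R n)`_k' else 0)
    + (rising_poly R n)`_k * n%:R.
Proof.
by rewrite /rising_poly big_ord_recr /= mulrDr coefD coefMX coefMC; case: k.
Qed.

Lemma stirling1_ge0 n k : 0 <= stirling1 R n k.
Proof.
elim: n k => [|n IHn] k.
  by rewrite /stirling1 /rising_poly big_ord0 coefC; case: (k == 0%N).
by rewrite /stirling1 coef_rising_polyS addr_ge0 ?mulr_ge0 ?IHn //; case: k.
Qed.

Lemma stirling1_gt0 n k : (k <= n)%N -> 0 < stirling1 R n.+1 k.+1.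
Proof.
elim: n k => [|n IHn] [|k] //= kn; rewrite /stirling1 coef_rising_polyS.
- by rewrite /rising_poly big_ord0 coefC /= mulr0 addr0 ltr01.
- by rewrite ltr_wpDl ?stirling1_ge0 // mulr_gt0 ?ltr0Sn ?(IHn 0%N).
- by rewrite ltr_wpDr ?mulr_ge0 ?stirling1_ge0 ?IHn.
Qed.

Lemma rising_ge_expr (t : R) n : 1 <= t -> t ^+ n <= rising t n.
Proof.
move=> t1; rewrite /rising -[in t ^+ n](card_ord n) -prodr_const.
by apply: ler_prod => i _; rewrite (le_trans _ t1) //= lerDl.
Qed.

Lemma rising_le_expr (t : R) n : 1 <= t -> rising t n <= (n%:R * t) ^+ n.
Proof.
move=> t1; have t0 : 0 <= t := le_trans ler01 t1.
rewrite /rising -[in X in _ <= X](card_ord n) -prodr_const.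
apply: ler_prod => i _; rewrite addr_ge0 //=.
have ti : t + i%:R <= i.+1%:R * t.
  by rewrite -addn1 natrD mulrDl mul1r addrC lerD2r ler_peMr.
by apply: le_trans ti _; rewrite card_ord ler_wpM2r // ler_nat.
Qed.

Lemma K_law_sum_power_bounds n (A : {set 'I_n}) (i0 : 'I_n) :
  i0 \in A -> (forall i : 'I_n, i \in A -> (i <= i0)%N) ->
  exists c C : R, 0 < c /\ forall t, 1 <= t ->
    c * t ^+ i0.+1 <= (\sum_(i in A) K_law t i) * t ^+ n <= C * t ^+ i0.+1.
Proof.
move=> Ai0 A_le; set m := i0.+1.
have s0 : 0 < stirling1 R n m.
  case: n {A Ai0 A_le} i0 @m => [[]//|n] i0 m.
  by rewrite stirling1_gt0 // -ltnS.
have n0 : (0 < n)%N := leq_ltn_trans (leq0n i0) (ltn_ord i0).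
set D := \sum_(i in A) stirling1 R n i.+1.
exists (stirling1 R n m / n%:R ^+ n), D; split.
  by rewrite divr_gt0 // exprn_gt0 // ltr0n.
move=> t t1; have t0 : 0 < t := lt_le_trans ltr01 t1.
set N := \sum_(i in A) stirling1 R n i.+1 * t ^+ i.+1.
have -> : \sum_(i in A) K_law t i = N / rising t n by rewrite mulr_suml.
have N_ge : stirling1 R n m * t ^+ m <= N.
  rewrite /N (bigD1 i0) //= lerDl sumr_ge0 // => i _.
  by rewrite mulr_ge0 ?stirling1_ge0 ?exprn_ge0 ?ltW.
have N_le : N <= D * t ^+ m.
  rewrite /D mulr_suml; apply: ler_sum => i Ai.
  by rewrite ler_wpM2l ?stirling1_ge0 // ler_weXn2l // ltnS A_le.
have rho_ge := rising_ge_expr n t1.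
have rho_le := rising_le_expr n t1; rewrite exprMn in rho_le.
have rho0 : 0 < rising t n := lt_le_trans (exprn_gt0 n t0) rho_ge.
have tn0 := exprn_gt0 n t0; have tm0 := exprn_gt0 m t0.
rewrite [N / _ * _]mulrAC; apply/andP; split.
- rewrite ler_pdivlMr //.
  apply: le_trans (_ : stirling1 R n m * t ^+ m * t ^+ n <= _); last first.
    by rewrite ler_wpM2r // ltW.
  rewrite -!mulrA ler_pM2l // mulrCA ler_pM2l // mulrC.
  by rewrite ler_pdivrMr ?exprn_gt0 ?ltr0n // mulrC.
- rewrite ler_pdivrMr //; apply: le_trans (ler_wpM2r (ltW tn0) N_le) _.
  apply: ler_wpM2l rho_ge; rewrite mulr_ge0 ?(ltW tm0) //.
  by apply: sumr_ge0 => i _; exact: stirling1_ge0.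
Qed.

End RisingFactorial.

Theorem theorem4p2 (R : realType) (n : nat) (hn : (1 <= n)%N) :
  LDP_finite (@K_law R n) (@ln R) (fun i : 'I_n => ((n - i.+1)%N)%:R%:E).
Proof.
split=> [i|A]; first by rewrite lee_fin ler0n.
have [-> | [j Aj]] := set_0Vmem A.
  have -> : ereal_inf [set ((n - i.+1)%N%:R : R)%:E
                        | i in [set i : 'I_n | i \in finset.set0]] = +oo%E.
    by apply/ereal_inf_pinfty => x [i]; rewrite /= inE.
  split; last exact: leNye.
  apply: limf_esup_le => e e0; near=> t.
  by rewrite /= big_set0 /elog_rate ltxx.
have [i0 Ai0 A_le] := arg_maxnP (fun i : 'I_n => i : nat) Aj.
have -> : ereal_inf [set ((n - i.+1)%N%:R : R)%:E | i in [set i | i \in A]] =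
          ((n - i0.+1)%N%:R)%:E.
  apply/le_anti/andP; split; first by apply: ereal_inf_lbound; exists i0.
  apply: le_ereal_inf_tmp => _ [i /= Ai <-].
  by rewrite lee_fin ler_nat leq_sub2l // ltnS; exact: A_le.
rewrite -EFinN natrB ?ltn_ord // opprB.
have [c [C [c0 bounds]]] := K_law_sum_power_bounds R Ai0 A_le.
exact: limf_elog_rate_sandwich c0 bounds.
Unshelve. all: by end_near.
Qed.
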